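(* Let $q$ be a power of $2$ and let $F$ be a field of characteristic $2$ containing $\mathbb{F}_q$. Let $L\in F[x]$ be a $q$-polynomial of $q$-degree $n$ with distinct roots. Then, unless $q=n=2$, the Galois group of $L$ over $F$, considered as a permutation group on the $q^n-1$ roots of $L(x)/x$, is contained in the alternating group $A_{q^n-1}$.
   Context: A $q$-polynomial over a field $F\supseteq\mathbb{F}_q$ is a polynomial of the form $a_0x+a_1x^q+\cdots+a_nx^{q^n}\in F[x]$; if $a_n\neq 0$ its $q$-degree is $n$. *)

From HB Require Import structures.
From mathcomp Require Import all_boot all_order all_algebra all_fingroup all_field.
Set Implicit Arguments. Unset Strict Implicit. Unset Printing Implicit Defensive.
Import GRing.Theory.
Local Open Scope ring_scope.

Definition is_qpoly (F : fieldType) (q n : nat) (L : {poly F}) : Prop :=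
  exists a : nat -> F, a n != 0 /\
    L = \sum_(i < n.+1) (a i)%:P * 'X^(q ^ i).

Definition contains_Fq (F : fieldType) (q : nat) : Prop :=
  exists (K : finFieldType) (f : {rmorphism K -> F}), #|K| = q.

From HB Require Import structures.
From mathcomp Require Import all_boot all_order all_algebra all_fingroup all_field.
From mathcomp Require Import zify ring.
Set Implicit Arguments. Unset Strict Implicit. Unset Printing Implicit Defensive.
Import GRing.Theory.

(* The roots of L form an F_2-vector space V of order q ^ n = 2 ^ m, m = k n, on
   which every Galois automorphism acts additively, so it suffices that an
   additive permutation g of an elementary abelian group of order 2 ^ m, m >= 3,
   is even.  An odd power h of g has 2-power order, and the number of cycles of h
   of length 2 ^ (j+1) is governed by the fixed points of h ^ (2 ^ j), i.e. by the
   kernels of N ^ (2 ^ j) with N = h + 1, since (h + 1) ^ (2 ^ j) = h ^ (2 ^ j) + 1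
   in characteristic 2.  With d i = log_2 |ker N ^ i|, which grows strictly until
   it stabilises and satisfies d (i+1) <= d i + d 1, these cycles are odd in number
   only when d (2 ^ j) = j + 1, which forces j <= 1; for m >= 3 the cases j = 0
   and j = 1 occur together.  When m <= 2 the only nontrivial case is q = 4,
   n = 1: the roots of L/x are the cube roots of -a_0/a_1, automorphisms multiply
   them by cube roots of unity, which lie in F_4 inside F, hence act with order
   dividing 3. *)

Section PermParity.

Variable T : finType.
Implicit Types p : {perm T}.

Lemma expg_porbit_fixE p x k : ((p ^+ k)%g x == x) = (#|porbit p x| %| k).
Proof.
set n := #|porbit p x|.
have n_gt0 : 0 < n by rewrite lt0n card_porbit_neq0.
have iter_mod i : iter i p x = iter (i %% n) p x.
  rewrite {1}(divn_eq i n) addnC iterD; congr (iter _ p _).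
  by elim: (i %/ n) => //= t IHt; rewrite mulSn iterD IHt iter_porbit.
have uniq_orbit := uniq_traject_porbit p x.
rewrite permX iter_mod /dvdn -(nth_traject p (ltn_pmod k n_gt0)).
by rewrite -[X in _ == X](nth_traject p n_gt0) nth_uniq ?size_traject ?ltn_pmod.
Qed.

Lemma odd_permX p k : odd_perm (p ^+ k)%g = odd k && odd_perm p.
Proof.
elim: k => [|k IHk]; first by rewrite expg0 odd_perm1.
by rewrite expgS odd_permM IHk /=; case: (odd_perm p); case: (odd k).
Qed.

Lemma even_perm_expg1 p k : odd k -> (p ^+ k)%g = 1%g -> ~~ odd_perm p.
Proof.
by move=> odd_k pk1; have := odd_permX p k; rewrite pk1 odd_perm1 odd_k /= => <-.
Qed.

Lemma sum_porbits (G : nat -> nat) p :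
  \sum_(x in T) G #|porbit p x| = \sum_(O in porbits p) #|O| * G #|O|.
Proof.
rewrite (partition_big_imset (porbit p)) /=.
apply: eq_bigr => _ /imsetP[y _ ->].
rewrite (eq_bigr (fun=> G #|porbit p y|)) => [|x /eqP -> //].
by rewrite (eq_bigl (mem (porbit p y))) ?sum_nat_const // => x; rewrite eq_porbit_mem.
Qed.

Lemma odd_perm_porbits p :
  odd_perm p = odd (\sum_(O in porbits p) ~~ odd #|O|).
Proof.
have cardT : #|T| = \sum_(O in porbits p) #|O| * 1.
  by rewrite -(sum_porbits (fun=> 1)) sum1_card.
rewrite /odd_perm cardT -sum1_card -oddD -big_split /=.
rewrite !(big_morph odd oddD (erefl : odd 0 = false)); apply: eq_bigr => O _.
by rewrite muln1 oddD addbT oddb.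
Qed.

Lemma card_porbit_eq p (N : nat) :
  #|[set x | #|porbit p x| == N]| = N * #|[set O in porbits p | #|O| == N]|.
Proof.
have -> : #|[set x | #|porbit p x| == N]| = \sum_(x in T) (#|porbit p x| == N).
  rewrite -sum1_card big_mkcond [RHS]big_mkcond /=.
  by apply: eq_bigr => x _; rewrite !inE.
rewrite (sum_porbits (fun n => (n == N) : nat)) -sum1_card big_distrr /=.
rewrite big_mkcond [RHS]big_mkcond /=.
apply: eq_bigr => O _; rewrite inE; case: (O \in _) => //=.
by case: eqP => [->|]; rewrite ?muln1 ?muln0.
Qed.

Lemma card_porbit_pow2 p a x :
  (p ^+ (2 ^ a))%g = 1%g -> exists2 e, e <= a & #|porbit p x| = 2 ^ e.
Proof.
move=> pa; apply/(dvdn_pfactor _ _ (isT : prime 2)).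
by rewrite -expg_porbit_fixE pa perm1.
Qed.

Lemma card_porbit_eq_pow2S p j :
  #|[set x | #|porbit p x| == 2 ^ j.+1]| =
  #|[set x | (p ^+ (2 ^ j.+1))%g x == x]| - #|[set x | (p ^+ (2 ^ j))%g x == x]|.
Proof.
have fix_sub :
    [set x | (p ^+ (2 ^ j))%g x == x] \subset [set x | (p ^+ (2 ^ j.+1))%g x == x].
  apply/subsetP => x; rewrite !inE !expg_porbit_fixE => /dvdn_trans; apply.
  by rewrite dvdn_exp2l.
rewrite -(setIidPr fix_sub) -cardsD; apply: eq_card => x; rewrite !inE !expg_porbit_fixE.
have [/(dvdn_pfactor _ _ (isT : prime 2))[e le_ej ->] | ndvd] :=
  boolP (#|porbit p x| %| 2 ^ j.+1).
  by rewrite eqn_exp2l // dvdn_Pexp2l // andbT -ltnNge eqn_leq le_ej.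
by rewrite andbF; apply/negbTE; apply: contra ndvd => /eqP ->.
Qed.

Lemma odd_perm_pow2 p a : (p ^+ (2 ^ a))%g = 1%g ->
  odd_perm p = odd (\sum_(j < a)
    (#|[set x | (p ^+ (2 ^ j.+1))%g x == x]| - #|[set x | (p ^+ (2 ^ j))%g x == x]|)
      %/ 2 ^ j.+1).
Proof.
move=> pa; rewrite odd_perm_porbits; congr odd.
under [RHS]eq_bigr do rewrite -card_porbit_eq_pow2S.
under [RHS]eq_bigr do rewrite card_porbit_eq mulKn ?expn_gt0 // -sum1_card big_mkcond.
rewrite exchange_big big_mkcond /=; apply: eq_bigr => O _.
case O_orbit: (O \in porbits p); last by rewrite big1 // => j _; rewrite inE O_orbit.
under eq_bigr do rewrite inE O_orbit /=.
have [x _ ->] := imsetP O_orbit; have [e le_ea ->] := card_porbit_pow2 x pa.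
rewrite (eq_bigr (fun j : 'I_a => (e == j.+1 : nat))) => [|j _]; last first.
  by rewrite eqn_exp2l.
rewrite oddX orbF; case: e le_ea => [|e] le_ea; first by rewrite big1.
rewrite (bigD1 (Ordinal le_ea)) //= eqxx big1 // => j.
by rewrite -val_eqE /= eqSS eq_sym => /negbTE ->.
Qed.

End PermParity.

Lemma odd_subn_pow2_div c e j : c <= e -> j < c ->
  odd ((2 ^ e - 2 ^ c) %/ 2 ^ j.+1) = (c == j.+1) && (c < e).
Proof.
move=> le_ce lt_jc.
have -> : 2 ^ e - 2 ^ c = 2 ^ j.+1 * (2 ^ (c - j.+1) * (2 ^ (e - c) - 1)).
  by rewrite mulnA -expnD subnKC // mulnBr muln1 -expnD subnKC.
rewrite mulKn ?expn_gt0 // oddM oddB ?expn_gt0 // !oddX /= !orbF addbT.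
by rewrite subn_eq0 -lt0n subn_gt0 eqn_leq lt_jc andbT.
Qed.

(* d i plays the role of log_2 |ker N ^ i| for a nilpotent additive map N. *)
Section RankSequence.

Variable d : nat -> nat.
Hypothesis d0 : d 0 = 0.
Hypothesis d_mono : {homo d : i j / i <= j}.
Hypothesis d_stable : forall i, d i = d i.+1 -> d i.+1 = d i.+2.
Hypothesis d_subadd : forall i, d i.+1 <= d i + d 1.

Lemma rank_stable i j : d i = d i.+1 -> i <= j -> d j = d i.
Proof.
move=> di /subnK <-.
suff [] : d (j - i + i) = d i /\ d (j - i + i) = d (j - i + i).+1 by [].
elim: (j - i) => [//|t [IHt IHt1]].
by rewrite addSn -(d_stable IHt1) -IHt1 IHt.
Qed.

Lemma rank_ge_index i : d i < d i.+1 -> i <= d i.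
Proof.
elim: i => [//|i IHi] lt_i1_i2.
have lt_i_i1 : d i < d i.+1.
  rewrite ltn_neqAle d_mono // andbT; apply/eqP => di.
  move: lt_i1_i2; rewrite (rank_stable di (leqnSn i)).
  by rewrite (rank_stable di (leqW (leqnSn i))) ltnn.
exact: leq_ltn_trans (IHi lt_i_i1) lt_i_i1.
Qed.

Lemma rank_ge_index_lt i j : i <= j -> d i < d j -> i <= d i.
Proof.
move=> le_ij lt_ij; apply: rank_ge_index; rewrite ltn_neqAle d_mono // andbT.
by apply/eqP => di; move: lt_ij; rewrite (rank_stable di le_ij) ltnn.
Qed.

Lemma odd_rank_term j :
  odd ((2 ^ d (2 ^ j.+1) - 2 ^ d (2 ^ j)) %/ 2 ^ j.+1) =
  (d (2 ^ j) == j.+1) && (d (2 ^ j) < d (2 ^ j.+1)).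
Proof.
have le_pow : 2 ^ j <= 2 ^ j.+1 by rewrite leq_exp2l.
have [lt_d|ge_d] := ltnP (d (2 ^ j)) (d (2 ^ j.+1)).
  rewrite odd_subn_pow2_div ?(ltnW lt_d) ?lt_d ?andbT //.
  exact: leq_trans (ltn_expl j (isT : 1 < 2)) (rank_ge_index_lt le_pow lt_d).
have -> : d (2 ^ j.+1) = d (2 ^ j) by apply/eqP; rewrite eqn_leq ge_d d_mono.
by rewrite subnn div0n andbF.
Qed.

Lemma odd_rank_term_ge2 j : 1 < j ->
  (d (2 ^ j) == j.+1) && (d (2 ^ j) < d (2 ^ j.+1)) = false.
Proof.
move=> gt1_j; apply/negP => /andP[/eqP dj lt_d].
have := rank_ge_index_lt (leq_pexp2l (isT : 0 < 2) (leqnSn j)) lt_d.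
rewrite dj; have := ltn_expl j.-1 (isT : 1 < 2).
case: j gt1_j {dj lt_d} => [//|j] gt1_j; rewrite expnS /=; lia.
Qed.

(* Only the terms j = 0 and j = 1 can be odd, and they are odd together. *)
Lemma even_rank_sum a : 2 < d (2 ^ a) ->
  ~~ odd (\sum_(j < a) (2 ^ d (2 ^ j.+1) - 2 ^ d (2 ^ j)) %/ 2 ^ j.+1).
Proof.
move=> gt2_top; rewrite (big_morph odd oddD (erefl : odd 0 = false)).
under eq_bigr do rewrite odd_rank_term.
have d1_gt0 : 0 < d 1.
  by rewrite lt0n; apply: contraTneq gt2_top => d1; rewrite (rank_stable (i := 0)) ?d0.
have := d_subadd 1; have := d_subadd 2; have := d_mono (leqnSn 1).
have := d_mono (leqnSn 2); have := d_mono (leqnSn 3).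
case: a gt2_top => [|[|a]] gt2_top; rewrite ?big_ord0 //.
  by move: gt2_top; rewrite big_ord_recl big_ord0 /= addbF expn0 expn1; lia.
rewrite !big_ord_recl big1 => [|j _]; last exact: odd_rank_term_ge2.
have le_3_top : 3 <= 2 ^ a.+2 by rewrite !expnS; have := expn_gt0 2 a; lia.
have d12 : d 1 = d 2 -> d (2 ^ a.+2) = d 1 by move/rank_stable; apply; lia.
have d23 : d 2 = d 3 -> d (2 ^ a.+2) = d 2 by move/rank_stable; apply; lia.
rewrite /= /bump /= addbF expn0 expn1 (_ : 2 ^ 2 = 4) //; lia.
Qed.

End RankSequence.

(* The group is given by its operation on a finite type: it will be the set of
   roots of L, transported to an ordinal type. *)
Section Elementary2Group.

Variables (T : finType) (z : T) (add : T -> T -> T).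
Hypothesis addA : associative add.
Hypothesis addC : commutative add.
Hypothesis add0 : left_id z add.
Hypothesis addxx : forall x, add x x = z.

Lemma addK x y : add (add x y) y = x.
Proof. by rewrite -addA addxx addC add0. Qed.

Lemma addACA a b c d : add (add a b) (add c d) = add (add a c) (add b d).
Proof. by rewrite -!addA (addA b) (addC b) -addA. Qed.

Lemma add_inj x : injective (add x).
Proof. by move=> a b eq_ab; rewrite -(addK a x) -(addK b x) !(addC _ x) eq_ab. Qed.

Lemma add_eq0 x y : (add x y == z) = (x == y).
Proof. by apply/eqP/eqP => [xy|->]; [rewrite -(addK x y) xy add0 | exact: addxx]. Qed.

Definition add_closed (S : {set T}) := z \in S /\ {in S &, forall x y, add x y \in S}.

Lemma add_closed_double U S : add_closed U -> add_closed S ->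
  U \subset S -> ~~ (S \subset U) ->
  exists U', [/\ add_closed U', U' \subset S & #|U'| = #|U|.*2].
Proof.
move=> [zU addU] [zS addS] sUS /subsetPn[x xS xU].
have sxUS : [set add x u | u in U] \subset S.
  by apply/subsetP => _ /imsetP[u uU ->]; rewrite addS // (subsetP sUS).
exists (U :|: [set add x u | u in U]); split.
- split=> [|u v]; first by rewrite inE zU.
  rewrite !inE => /orP[uU | /imsetP[u' u'U ->]] /orP[vU | /imsetP[v' v'U ->]].
  + by rewrite addU.
  + apply/orP; right; apply/imsetP; exists (add u v'); first exact: addU.
    by rewrite addA (addC u) -addA.
  + by apply/orP; right; apply/imsetP; exists (add u' v); rewrite ?addU // addA.
  + by rewrite addACA addxx add0 addU.
- by rewrite subUset sUS.
have disjU : [disjoint U & [set add x u | u in U]].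
  apply/pred0P => w /=; apply/negP => /andP[wU /imsetP[u uU w_def]].
  by move: xU; rewrite -(addK x u) -w_def addU.
rewrite cardsU disjoint_setI0 // cards0 subn0 card_imset ?addnn //; exact: add_inj.
Qed.

Lemma card_add_closed S : add_closed S -> exists e, #|S| = 2 ^ e.
Proof.
move=> clS.
suff grow n (U : {set T}) : #|S| - #|U| < n -> add_closed U -> U \subset S ->
    (exists e, #|U| = 2 ^ e) -> exists e, #|S| = 2 ^ e.
  apply: (grow #|S|.+1 [set z]) => //; first by rewrite ltnS leq_subr.
  - split=> [|x y]; first by rewrite inE.
    by rewrite !inE => /eqP-> /eqP->; rewrite add0.
  - by rewrite sub1set; case: clS.
  - by exists 0; rewrite cards1.
elim: n U => [//|n IHn] U ltSU clU sUS [e cardU].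
have [sSU|nsSU] := boolP (S \subset U).
  by exists e; rewrite -cardU; apply/eqP; rewrite eqn_leq !subset_leq_card.
have [U' [clU' sU'S cardU']] := add_closed_double clU clS sUS nsSU.
apply: (IHn U') => //; last by exists e.+1; rewrite cardU' cardU expnS mul2n.
have := subset_leq_card sU'S; have := expn_gt0 2 e.
by move: ltSU; rewrite cardU' cardU -addnn; lia.
Qed.

Section IteratedKernels.

Variable f : T -> T.
Hypothesis fM : {morph f : x y / add x y}.

Lemma iter_morph i : {morph iter i f : x y / add x y}.
Proof. by elim: i => [//|i IHi] x y /=; rewrite IHi fM. Qed.

Lemma iter_morph_z i : iter i f z = z.
Proof. by have := iter_morph i z z; rewrite !addxx. Qed.

Definition ker_iter i := [set x | iter i f x == z].

Definition ker_rank i := trunc_log 2 #|ker_iter i|.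

Lemma ker_iter_closed i : add_closed (ker_iter i).
Proof.
split=> [|x y]; first by rewrite inE iter_morph_z.
by rewrite !inE iter_morph => /eqP-> /eqP->; rewrite addxx.
Qed.

Lemma card_ker_iter i : #|ker_iter i| = 2 ^ ker_rank i.
Proof.
rewrite /ker_rank; have [e ->] := card_add_closed (ker_iter_closed i).
by rewrite trunc_expnK.
Qed.

Lemma ker_iter_mono i j : i <= j -> ker_iter i \subset ker_iter j.
Proof.
move=> /subnK <-; apply/subsetP => x; rewrite !inE iterD => /eqP->.
exact/eqP/iter_morph_z.
Qed.

Lemma ker_rank_mono : {homo ker_rank : i j / i <= j}.
Proof.
move=> i j /ker_iter_mono/subset_leq_card.
by rewrite !card_ker_iter leq_exp2l.
Qed.

Lemma ker_rank0 : ker_rank 0 = 0.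
Proof.
by rewrite /ker_rank (_ : ker_iter 0 = [set z]) ?cards1 //; apply/setP => x; rewrite !inE.
Qed.

Lemma ker_rank_stable i : ker_rank i = ker_rank i.+1 -> ker_rank i.+1 = ker_rank i.+2.
Proof.
move=> eq_rank; have sub_i := ker_iter_mono (leqnSn i).
have eq_ker : ker_iter i = ker_iter i.+1.
  by apply/eqP; rewrite eqEcard sub_i !card_ker_iter eq_rank /=.
suff eq_ker2 : ker_iter i.+2 = ker_iter i.+1 by rewrite /ker_rank eq_ker2.
apply/eqP; rewrite eqEsubset [X in _ && X]ker_iter_mono // andbT; apply/subsetP => x.
rewrite inE iterSr => fx0.
have : f x \in ker_iter i by rewrite eq_ker inE.
by rewrite !inE -iterSr.
Qed.

Lemma card_ker_iterS i : #|ker_iter i.+1| <= #|ker_iter i| * #|ker_iter 1|.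
Proof.
pose g := iter i f.
pose rep y := odflt z [pick x in ker_iter i.+1 | g x == y].
have repP x : x \in ker_iter i.+1 -> rep (g x) \in ker_iter i.+1 /\ g (rep (g x)) = g x.
  move=> xK; rewrite /rep; case: pickP => [w /andP[wK /eqP->] // | /(_ x)].
  by rewrite xK eqxx.
pose phi x := (g x, add x (rep (g x))).
have phi_inj : {in ker_iter i.+1 &, injective phi}.
  by move=> x y _ _ [gxy]; rewrite gxy !(addC _ (rep _)) => /add_inj.
rewrite mulnC -cardsX -(card_in_imset phi_inj) subset_leq_card //.
apply/subsetP => _ /imsetP[x xK ->]; have [repK g_rep] := repP x xK.
rewrite !inE /=; apply/andP; split; first by move: xK; rewrite inE.
by rewrite iter_morph -/g g_rep addxx.
Qed.

Lemma ker_rank_subadd i : ker_rank i.+1 <= ker_rank i + ker_rank 1.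
Proof.
by rewrite -(leq_exp2l _ _ (isT : 1 < 2)) expnD -!card_ker_iter card_ker_iterS.
Qed.

End IteratedKernels.

Lemma iter_add_id_pow2 (h : {perm T}) j : {morph h : x y / add x y} ->
  forall x, iter (2 ^ j) (fun x => add (h x) x) x = add ((h ^+ (2 ^ j))%g x) x.
Proof.
move=> hM; elim: j => [|j IHj] x; first by rewrite expg1.
have hjM : {morph (h ^+ (2 ^ j))%g : x y / add x y}.
  by move=> u v; rewrite !permX (iter_morph hM).
rewrite expnS mul2n -addnn iterD !IHj hjM expgD permM.
by rewrite -addA (addA (_ x)) addxx add0.
Qed.

Lemma morph_perm_even (g : {perm T}) m :
  {morph g : x y / add x y} -> #|T| = 2 ^ m -> 2 < m -> ~~ odd_perm g.
Proof.
move=> gM cardT gt2_m.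
set b := #[g]%g`_(2^'); set a := logn 2 #[g]%g; set h := (g ^+ b)%g.
have odd_b : odd b by have := part_pnat (2^') #[g]%g; rewrite p'natE // dvdn2 negbK.
have h_pow2 : (h ^+ (2 ^ a))%g = 1%g.
  by rewrite -expgM mulnC /a /b -p_part partnC ?order_gt0 // expg_order.
have hM : {morph h : x y / add x y} by move=> x y; rewrite !permX (iter_morph gM).
have -> : odd_perm g = odd_perm h by rewrite /h odd_permX odd_b.
pose f x := add (h x) x; have fM : {morph f : x y / add x y}.
  by move=> x y; rewrite /f hM addACA.
have fix_ker j : [set x | (h ^+ (2 ^ j))%g x == x] = ker_iter f (2 ^ j).
  by apply/setP => x; rewrite !inE iter_add_id_pow2 // add_eq0.
rewrite (odd_perm_pow2 h_pow2).
under eq_bigr do rewrite !fix_ker !card_ker_iter //.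
apply: even_rank_sum; rewrite ?ker_rank0 //.
- exact: ker_rank_mono.
- exact: ker_rank_stable.
- exact: ker_rank_subadd.
have ker_top : ker_iter f (2 ^ a) = [set: T].
  by apply/setP => x; rewrite -fix_ker !inE h_pow2 perm1 eqxx.
by rewrite /ker_rank ker_top cardsT cardT trunc_expnK.
Qed.

End Elementary2Group.

Local Open Scope ring_scope.

Lemma morph_perm_nonzero_even (R : zmodType) (rs : seq R) (sg : R -> R)
    (s : 'S_(size rs)) m :
  (forall x : R, x + x = 0) -> uniq (0 :: rs) ->
  {in 0 :: rs &, forall x y, x + y \in 0 :: rs} -> {morph sg : x y / x + y} ->
  (forall i : 'I_(size rs), sg rs`_i = rs`_(s i)) ->
  (size rs).+1 = (2 ^ m)%N -> (2 < m)%N -> ~~ odd_perm s.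
Proof.
move=> addxx Urs addV sgD sg_s cardV gt2_m.
(* Index i : 'I_(size rs).+1 stands for (0 :: rs)`_i; s lifts to a permutation
   fixing the index of 0. *)
pose V := 0 :: rs; pose elt (i : 'I_(size V)) := V`_i.
have elt_inj : injective elt by move=> i j /eqP; rewrite nth_uniq // => /eqP/val_inj.
pose addi i j : 'I_(size V) := inord (index (elt i + elt j) V).
have eltV i : elt i \in V by rewrite mem_nth.
have eltD i j : elt (addi i j) = elt i + elt j.
  by rewrite /elt inordK ?nth_index ?index_mem ?addV ?eltV.
have addA : associative addi by move=> i j k; apply: elt_inj; rewrite !eltD addrA.
have addC : commutative addi by move=> i j; apply: elt_inj; rewrite !eltD addrC.
have add0 : left_id ord0 addi by move=> i; apply: elt_inj; rewrite eltD add0r.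
have addii i : addi i i = ord0 by apply: elt_inj; rewrite eltD addxx.
have sg0 : sg 0 = 0 by apply: (addrI (sg 0)); rewrite -sgD !addr0.
pose h := lift_perm ord0 ord0 s.
have elt_h i : elt (h i) = sg (elt i).
  have [j ->|->] := unliftP ord0 i; last by rewrite lift_perm_id sg0.
  by rewrite lift_perm_lift /elt !lift0 /= sg_s.
have hD : {morph h : i j / addi i j}.
  by move=> i j; apply: elt_inj; rewrite elt_h !eltD !elt_h sgD.
have := morph_perm_even addA addC add0 addii hD _ gt2_m.
by rewrite card_ord odd_lift_perm /=; apply.
Qed.

Definition qpoly (R : nzRingType) (q n : nat) (a : nat -> R) : {poly R} :=
  \sum_(i < n.+1) (a i)%:P * 'X^(q ^ i).

Lemma map_qpoly (R S : nzRingType) (f : {rmorphism R -> S}) q n a :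
  map_poly f (qpoly q n a) = qpoly q n (f \o a).
Proof.
rewrite /qpoly rmorph_sum; apply: eq_bigr => i _.
by rewrite rmorphM /= map_polyC map_polyXn.
Qed.

Lemma horner_qpoly (R : comNzRingType) q n (a : nat -> R) x :
  (qpoly q n a).[x] = \sum_(i < n.+1) a i * x ^+ (q ^ i).
Proof. by rewrite horner_sum; apply: eq_bigr => i _; rewrite hornerCM hornerXn. Qed.

Lemma horner_qpolyD (R : comNzRingType) q n (a : nat -> R) x y :
  [pchar R].-nat q -> (qpoly q n a).[x + y] = (qpoly q n a).[x] + (qpoly q n a).[y].
Proof.
move=> pchar_q; rewrite !horner_qpoly -big_split; apply: eq_bigr => i _ /=.
by rewrite exprDn_pchar ?mulrDr // pnatX pchar_q.
Qed.

Lemma size_qpoly (R : idomainType) q n (a : nat -> R) :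
  a n != 0 -> (1 < q)%N -> size (qpoly q n a) = (q ^ n).+1.
Proof.
move=> an_neq0 gt1_q; rewrite /qpoly big_ord_recr /= addrC.
rewrite size_polyDl size_Cmul ?size_polyXn // ltnS.
apply: leq_trans (size_sum _ _ _) _; apply/bigmax_leqP => i _.
by rewrite mul_polyC (leq_trans (size_scale_leq _ _)) // size_polyXn ltn_exp2l.
Qed.

Lemma size_uniq_roots (R : idomainType) (P : {poly R}) (rs rs1 : seq R) :
  separable_poly P -> P %= \prod_(r <- rs1) ('X - r%:P) -> uniq rs ->
  (forall x, (x \in rs) = root P x) -> size rs = (size P).-1.
Proof.
move=> sepP P_split Urs rsP.
have Urs1 : uniq rs1 by rewrite -separable_prod_XsubC -(eqp_separable P_split).
have /perm_size -> : perm_eq rs rs1.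
  by apply: uniq_perm => // x; rewrite rsP (eqp_root P_split) root_prod_XsubC.
by rewrite (eqp_size P_split) size_prod_XsubC.
Qed.

Lemma roots_cons0 (R : fieldType) (P : {poly R}) (rs : seq R) :
  separable_poly P -> root P 0 -> uniq rs ->
  (forall x, x \in rs <-> root (P %/ 'X) x) ->
  uniq (0 :: rs) /\ (forall x, (x \in 0 :: rs) = root P x).
Proof.
move=> sepP P0 Urs rsM.
have P_def : P = P %/ 'X * 'X.
  by rewrite divpK //; move: P0; rewrite root_factor_theorem polyC0 subr0.
have M0 : ~~ root (P %/ 'X) 0.
  by move: sepP; rewrite {1}P_def separable_mul coprimepX => /and3P[].
have mem_rs x : (x \in rs) = root (P %/ 'X) x by apply/idP/idP => /rsM.
split; first by rewrite /= mem_rs M0.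
by move=> x; rewrite inE mem_rs {2}P_def rootM rootX orbC.
Qed.

Lemma qpoly_roots (F : fieldType) (E : fieldExtType F) q n (a : nat -> F)
    (rs rs1 : seq E) :
  [pchar E].-nat q -> (1 < q)%N -> a n != 0 -> separable_poly (qpoly q n a) ->
  map_poly (in_alg E) (qpoly q n a) %= \prod_(r <- rs1) ('X - r%:P) -> uniq rs ->
  (forall x, x \in rs <-> root (map_poly (in_alg E) (qpoly q n a %/ 'X)) x) ->
  [/\ uniq (0 :: rs), (size rs).+1 = (q ^ n)%N
    & forall x, (x \in 0 :: rs) = root (qpoly q n (in_alg E \o a)) x].
Proof.
move=> pchar_q gt1_q an_neq0 sepL L_split Urs rsM.
set LE := map_poly (in_alg E) (qpoly q n a) in L_split *.
have LE_def : LE = qpoly q n (in_alg E \o a) by rewrite /LE map_qpoly.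
have sepLE : separable_poly LE by rewrite separable_map.
have LE0 : root LE 0.
  rewrite LE_def; apply/eqP/(addrI (qpoly q n (in_alg E \o a)).[0]).
  by rewrite -horner_qpolyD ?addr0.
have rsLE x : x \in rs <-> root (LE %/ 'X) x.
  by rewrite -(map_polyX (in_alg E)) -map_divp; apply: rsM.
have [U0rs memV] := roots_cons0 sepLE LE0 Urs rsLE.
split=> //; last by move=> x; rewrite memV LE_def.
rewrite -[_.+1]/(size (0 :: rs)) (size_uniq_roots sepLE L_split) //.
by rewrite size_map_poly size_qpoly.
Qed.

Lemma qpoly41_root_cube (R : idomainType) (a : nat -> R) (y : R) :
  y != 0 -> root (qpoly 4 1 a) y -> a 1%N * y ^+ 3 = - a 0%N.
Proof.
move=> y0; rewrite /root horner_qpoly big_ord_recr big_ord1 /= expn0 expn1 expr1.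
rewrite (_ : _ + _ = y * (a 1%N * y ^+ 3 + a 0%N)); last by ring.
by rewrite mulf_eq0 (negbTE y0) addr_eq0 => /eqP.
Qed.

Lemma finField4_cube_root1 (K : finFieldType) :
  #|K| = 4%N -> exists w : K, w ^+ 2 + w + 1 = 0.
Proof.
move=> cardK; have [w /andP[w0 w1]] : exists w : K, (w != 0) && (w != 1).
  apply/existsP; apply: contraT; rewrite negb_exists => /forallP only01.
  suff : (#|K| <= 2)%N by rewrite cardK.
  rewrite -cardsT (leq_trans (subset_leq_card (_ : _ \subset [set 0; 1]))) //.
    by apply/subsetP => x _; rewrite !inE; have := only01 x; rewrite negb_and !negbK.
  by rewrite cards2; case: (_ != _).
have w3 : w ^+ 3 = 1.
  by apply: (mulfI w0); rewrite -exprS -{2}(expf_card w) cardK mulr1.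
exists w; apply: (mulfI (_ : w - 1 != 0)); first by rewrite subr_eq0.
by rewrite mulr0 -(subrr (1 : K)) -[X in _ = X - _]w3; ring.
Qed.

Lemma cube_root1_cases (R : idomainType) (w c : R) :
  w ^+ 2 + w + 1 = 0 -> c ^+ 3 = 1 -> c \in [:: 1; w; w ^+ 2].
Proof.
move=> w_root c3; have : (c - 1) * (c - w) * (c - w ^+ 2) = 0.
  rewrite (_ : _ * _ = c ^+ 3 - 1 - (w ^+ 2 + w + 1) * (c ^+ 2 - w * c + w - 1)).
    by rewrite w_root mul0r subr0 c3 subrr.
  by ring.
by move/eqP; rewrite !mulf_eq0 !subr_eq0 !inE orbA.
Qed.

Section GaloisCubeRoots.

Variables (F : fieldType) (E : splittingFieldType F).
Variable sigma : gal_of (fullv : {vspace E}).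
Hypothesis sigma_gal : sigma \in 'Gal(fullv / 1%VS)%g.
Variable w : F.
Hypothesis w_root : w ^+ 2 + w + 1 = 0.

Lemma gal_fix_cube_root1 (c : E) : c ^+ 3 = 1 -> sigma c = c.
Proof.
move=> c3; apply: (fixed_gal (subvf _) sigma_gal).
have wE_root : (in_alg E w) ^+ 2 + in_alg E w + 1 = 0.
  by have := congr1 (in_alg E) w_root; rewrite !rmorphD rmorphXn rmorph1 rmorph0.
have := cube_root1_cases wE_root c3; rewrite !inE -rmorphXn.
by case/or3P => /eqP->; rewrite ?mem1v ?rpredZ ?mem1v.
Qed.

Lemma gal_cube_orbit (y : E) :
  y != 0 -> sigma y ^+ 3 = y ^+ 3 -> sigma (sigma (sigma y)) = y.
Proof.
move=> y0 cube_y; pose c := sigma y / y.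
have c3 : c ^+ 3 = 1 by rewrite exprMn exprVn cube_y divff // expf_neq0.
have sigma_y : sigma y = c * y by rewrite divfK.
have sigma_cz z : sigma (c * z) = c * sigma z.
  by rewrite rmorphM; congr (_ * _); exact: gal_fix_cube_root1.
rewrite sigma_y !sigma_cz sigma_y sigma_cz sigma_y.
have c3y : c * (c * (c * y)) = c ^+ 3 * y by ring.
by rewrite c3y c3 mul1r.
Qed.

Lemma qpoly41_gal_even (a : nat -> F) (rs : seq E) (s : 'S_(size rs)) :
  a 1%N != 0 -> uniq (0 :: rs) ->
  (forall x, (x \in 0 :: rs) = root (qpoly 4 1 (in_alg E \o a)) x) ->
  (forall i : 'I_(size rs), sigma rs`_i = rs`_(s i)) -> ~~ odd_perm s.
Proof.
move=> a1_neq0 /andP[rs0 Urs] memV sigma_s.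
have rs_cube y : y \in rs -> in_alg E (a 1%N) * y ^+ 3 = - in_alg E (a 0%N).
  move=> yrs; apply: (qpoly41_root_cube (a := in_alg E \o a)).
    by apply: contraNneq rs0 => <-.
  by rewrite -memV inE yrs orbT.
have a1E : in_alg E (a 1%N) != 0 by rewrite fmorph_eq0.
apply: (even_perm_expg1 (k := 3)) => //; apply/permP => i; rewrite permX perm1 /=.
apply/val_inj/eqP; rewrite -(nth_uniq 0 _ _ Urs) ?ltn_ord // -!sigma_s.
have rs_i : rs`_i \in rs by rewrite mem_nth.
apply/eqP/gal_cube_orbit; first by apply: contraNneq rs0 => <-.
by apply: (mulfI a1E); rewrite !rs_cube // sigma_s mem_nth.
Qed.

End GaloisCubeRoots.

Theorem theorem8 (q k n : nat) (F : fieldType) (E : splittingFieldType F)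
    (L : {poly F}) (rs : seq E) :
  (0 < k)%N -> q = (2 ^ k)%N ->
  (2 \in [pchar F])%N ->
  contains_Fq F q ->
  is_qpoly q n L ->
  separable_poly L ->
  splittingFieldFor 1%VS (map_poly (in_alg E) L) fullv ->
  uniq rs ->
  (forall x : E, x \in rs <-> root (map_poly (in_alg E) (L %/ 'X)) x) ->
  ~~ ((q == 2) && (n == 2))%N ->
  forall sigma : gal_of (fullv : {vspace E}), sigma \in ('Gal(fullv / 1%VS))%g ->
  forall s : 'S_(size rs),
    (forall i : 'I_(size rs), sigma rs`_i = rs`_(s i)) ->
    ~~ odd_perm s.
Proof.
move=> k_gt0 qk pchar2F [K [iota cardK]] [a [an_neq0 ->]] sepL [rs1 L_split _].
move=> Urs rsM notq2n2 sigma sigma_gal s sigma_s.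
have pchar2E : (2 \in [pchar E])%N by rewrite (pchar_lalg E 2).
have pchar_q : [pchar E].-nat q by rewrite qk pnatX pnatE // pchar2E.
have gt1_q : (1 < q)%N by rewrite qk -{1}(expn0 2) ltn_exp2l.
have [U0rs cardV memV] := qpoly_roots pchar_q gt1_q an_neq0 sepL L_split Urs rsM.
rewrite qk -expnM in cardV.
have [big|small] := leqP 3 (k * n).
  apply: (morph_perm_nonzero_even (addrr_pchar2 pchar2E) U0rs _ _ sigma_s cardV big).
    by move=> x y; rewrite !memV /root horner_qpolyD // => /eqP-> /eqP->; rewrite addr0.
  exact: rmorphD.
have [/permS01->|two_roots] := leqP (size rs) 1; first by rewrite odd_perm1.
have kn2 : (k * n = 2)%N.
  by move: two_roots small; rewrite -ltnS cardV; case: (k * n)%N => [|[|[|]]].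
have n_gt0 : (0 < n)%N by rewrite lt0n; apply/eqP => n0; move: kn2; rewrite n0 muln0.
have k2 : k = 2%N.
  have k_neq1 : k != 1%N.
    by apply: contra notq2n2 => /eqP k1; move: kn2; rewrite qk k1 mul1n => ->.
  by have := leq_pmulr k n_gt0; rewrite kn2; lia.
have n1 : n = 1%N by move: kn2; rewrite k2; lia.
subst q k n; have [w w_root] := finField4_cube_root1 cardK.
apply: (qpoly41_gal_even sigma_gal (w := iota w)) U0rs memV sigma_s => //.
by rewrite -rmorphXn -rmorphD -(rmorph1 iota) -rmorphD w_root rmorph0.
Qed.
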